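(* Let $(\mathbb{B},\|\cdot\|)$ be a Banach space, $(\mathcal{F}_n)_{n\ge0}$ a filtration, $n\ge1$, $p\in(1,2]$, $v>0$, $\mu\in\mathbb{B}$, and let $X_n$ be a $\mathbb{B}$-valued random variable with $\mathbb{E}(X_n\mid\mathcal{F}_{n-1})=\mu$ and $\mathbb{E}(\|X_n-\mu\|^p\mid\mathcal{F}_{n-1})\le v<\infty$. Let $\widehat{Z}_n$ be an $\mathcal{F}_{n-1}$-measurable $\mathbb{B}$-valued random variable, set $Y_n:=X_n-\widehat{Z}_n$, and for $\lambda>0$ define $\widetilde{\mu}_n(\lambda):=\mathbb{E}(\mathtt{Trunc}(\lambda Y_n)Y_n\mid\mathcal{F}_{n-1})+\widehat{Z}_n$. Then, almost surely, \[ \|\mu-\widetilde{\mu}_n(\lambda)\|\le K_p2^{p-1}\lambda^{p-1}\big(v+\|\widehat{Z}_n-\mu\|^p\big). \]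
   Context: $\mathtt{Trunc}(x):=\min\{1,1/\|x\|\}$ for $x\ne0$ and $\mathtt{Trunc}(0):=1$. $K_p:=\frac{1}{p}\left(\frac{p-1}{p}\right)^{p-1}$. *)

From HB Require Import structures.
From mathcomp Require Import all_boot all_order all_algebra.
From mathcomp Require Import all_classical all_reals all_analysis.
Set Implicit Arguments. Unset Strict Implicit. Unset Printing Implicit Defensive.
Import Order.TTheory GRing.Theory Num.Theory.
Import numFieldNormedType.Exports.
Local Open Scope classical_set_scope.
Local Open Scope ring_scope.

Definition Trunc {R : realType} {V : normedModType R} (x : V) : R :=
  if x == 0 then 1 else Num.min 1 (`|x|^-1).

Definition Kp {R : realType} (p : R) : R := p^-1 * ((p - 1) / p) `^ (p - 1).

Definition sub_sigma {d} {T : measurableType d} (G : set (set T)) : Prop :=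
  sigma_algebra setT G /\ G `<=` measurable.

Definition strongly_meas {d} {T : measurableType d} {R : realType}
    {V : normedModType R} (G : set (set T)) (f : T -> V) : Prop :=
  exists s : nat -> T -> V,
    (forall k, finite_set (range (s k)) /\ forall y, G (s k @^-1` [set y])) /\
    (forall t, (fun k => s k t) @ \oo --> f t).

(* Y is a version of the (Bochner) conditional expectation E(X | G):
   X strongly measurable with integrable norm, Y strongly G-measurable with
   integrable norm, and for every continuous linear functional phi and every
   A in G, int_A phi(X) dP = int_A phi(Y) dP (equivalently, by Hahn-Banach and
   separability of the ranges, int_A X dP = int_A Y dP as Bochner integrals). *)
Definition cond_exp {d} {T : measurableType d} {R : realType}
    {V : normedModType R} (P : probability T R) (G : set (set T))
    (X Y : T -> V) : Prop :=
  [/\ strongly_meas measurable X,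
      P.-integrable setT (EFin \o (fun t => `|X t|)),
      strongly_meas G Y,
      P.-integrable setT (EFin \o (fun t => `|Y t|)) &
      forall (phi : {linear V -> R^o}), continuous phi ->
        forall A, G A ->
          (\int[P]_(t in A) (phi (X t))%:E = \int[P]_(t in A) (phi (Y t))%:E)%E].

From HB Require Import structures.
From mathcomp Require Import all_boot all_order all_algebra.
From mathcomp Require Import all_classical all_reals all_analysis.
From mathcomp Require Import ring lra measurable_realfun.
Set Implicit Arguments. Unset Strict Implicit. Unset Printing Implicit Defensive.
Import Order.TTheory GRing.Theory Num.Theory.
Import numFieldNormedType.Exports.
Local Open Scope classical_set_scope.
Local Open Scope ring_scope.

(* For y = X_n - Zh_n, truncation moves y by at most K_p lambda^(p-1) |y|^p,
   because s - 1 <= K_p s^p for s = lambda |y| (Young's inequality), and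
   |y|^p <= 2^(p-1) (|X_n - mu|^p + |Zh_n - mu|^p) by convexity.  Since
   mu - mu_tilde is the conditional expectation of y - Trunc(lambda y) y, the
   bound holds a.s. for phi(mu - mu_tilde) for every linear functional phi of
   norm at most 1: integrate over the sets of F_(n-1) on which it fails.
   Hahn-Banach gives norming functionals for the countably many values of
   simple functions approximating mu - mu_tilde, which turns these countably
   many a.s. bounds into the bound on the norm. *)

Section real_inequalities.
Variable R : realType.
Implicit Types a b p s x : R.

Lemma bernoulli_powR p x : 1 < p -> 0 <= x -> 1 + p * (x - 1) <= x `^ p.
Proof.
move=> p1 x0; have p0 : 0 < p := lt_trans ltr01 p1.
have q0 : 0 < p / (p - 1) by rewrite divr_gt0 // subr_gt0.
have := @conjugate_powR R x 1 p (p / (p - 1)) x0 ler01 p0 q0.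
rewrite invf_div powR1 mulr1 mul1r -mulrDl ler_pdivlMr // => young.
suff : x * p <= x `^ p + (p - 1) by nra.
by apply: young; field; rewrite gt_eqF.
Qed.

Lemma subr1_le_Kp_powR p s : 1 < p -> 0 <= s -> s - 1 <= Kp p * s `^ p.
Proof.
move=> p1 s0; have p0 : 0 < p := lt_trans ltr01 p1.
have pB0 : 0 < p - 1 by rewrite subr_gt0.
set r := (p - 1) / p; have r0 : 0 < r by rewrite divr_gt0.
have := bernoulli_powR p1 (mulr_ge0 s0 (ltW r0)).
rewrite powRM ?(ltW r0) // -(mulr_powRB1 (ltW r0) p0) /Kp -/r.
have -> : 1 + p * (s * r - 1) = (p - 1) * (s - 1) by rewrite /r; field; rewrite gt_eqF.
have -> : s `^ p * (r * r `^ (p - 1)) = (p - 1) * (p^-1 * r `^ (p - 1) * s `^ p).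
  by rewrite /r; field; rewrite gt_eqF.
by rewrite ler_pM2l.
Qed.

Lemma powRD_le p a b : 1 <= p -> 0 <= a -> 0 <= b ->
  (a + b) `^ p <= 2 `^ (p - 1) * (a `^ p + b `^ p).
Proof.
move=> p1 a0 b0; have p0 : 0 < p := lt_le_trans ltr01 p1.
have midpoint : (2^-1 * a + 2^-1 * b) `^ p <= 2^-1 * a `^ p + 2^-1 * b `^ p.
  rewrite {2 4}(_ : 2^-1 = 1 - 2^-1); last by rewrite {2}(splitr 1) div1r addrK.
  by apply: (convex_powR p1 (Itv01 _ _)) => //=;
    rewrite ?inE/= ?in_itv/= ?a0 ?b0 ?invr_ge0// invf_le1 ?ler1n.
have -> : a + b = 2 * (2^-1 * a + 2^-1 * b) by rewrite -mulrDr mulVKf ?pnatr_eq0.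
rewrite powRM ?addr_ge0 ?mulr_ge0 // -(mulr_powRB1 _ p0) //.
rewrite (mulrC 2) -mulrA ler_pM2l ?powR_gt0 //.
apply: le_trans (ler_wpM2l (ler0n _ 2) midpoint) _.
by rewrite -mulrDr mulrA mulfV ?mul1r ?pnatr_eq0.
Qed.
End real_inequalities.

Section truncation.
Variables (R : realType) (V : normedModType R).
Implicit Types p lam : R.

Lemma Kp_ge0 p : 0 < p -> 0 <= Kp p.
Proof. by move=> p0; rewrite /Kp mulr_ge0 ?powR_ge0 // invr_ge0 ltW. Qed.

Lemma norm_sub_Trunc_le (y : V) lam p : 0 < lam -> 1 < p ->
  `|y - Trunc (lam *: y) *: y| <= Kp p * lam `^ (p - 1) * `|y| `^ p.
Proof.
move=> lam0 p1; have p0 : 0 < p := lt_trans ltr01 p1.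
rewrite /Trunc scaler_eq0 (gt_eqF lam0) /=.
have rhs_ge0 r : 0 <= Kp p * lam `^ (p - 1) * r `^ p.
  by rewrite mulr_ge0 ?powR_ge0 // mulr_ge0 ?Kp_ge0 ?powR_ge0.
have [-> | y0] := eqVneq y 0; first by rewrite scaler0 subrr normr0.
rewrite normrZ gtr0_norm //.
set s := lam * `|y|; have s0 : 0 < s by rewrite mulr_gt0 ?normr_gt0.
have [s1 | s1] := leP s 1.
  by rewrite (min_idPl _) ?invf_ge1 // scale1r subrr normr0.
rewrite (min_idPr _); last by rewrite invf_le1 // ltW.
rewrite -{1}(scale1r y) -scalerBl normrZ ger0_norm; last first.
  by rewrite subr_ge0 invf_le1 // ltW.
have -> : (1 - s^-1) * `|y| = (s - 1) / lam.
  by rewrite /s; field; rewrite ?gt_eqF ?normr_gt0.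
have -> : Kp p * lam `^ (p - 1) * `|y| `^ p = Kp p * s `^ p / lam.
  rewrite /s powRM ?ltW ?normr_gt0 // -(mulr_powRB1 (ltW lam0) p0).
  by field; rewrite gt_eqF.
by rewrite ler_pM2r ?invr_gt0 // subr1_le_Kp_powR ?ltW.
Qed.

Lemma norm_sub_Trunc_le_around (x z c : V) lam p : 0 < lam -> 1 < p ->
  `|(x - z) - Trunc (lam *: (x - z)) *: (x - z)| <=
    Kp p * 2 `^ (p - 1) * lam `^ (p - 1) * (`|x - c| `^ p + `|z - c| `^ p).
Proof.
move=> lam0 p1; have p0 : 0 < p := lt_trans ltr01 p1.
apply: le_trans (norm_sub_Trunc_le _ lam0 p1) _.
set S := `|x - c| `^ p + _.
rewrite [leRHS](_ : _ = Kp p * lam `^ (p - 1) * (2 `^ (p - 1) * S)); last by ring.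
rewrite ler_wpM2l ?(mulr_ge0 (Kp_ge0 p0) (powR_ge0 _ _)) // /S.
apply: le_trans (powRD_le (ltW p1) (normr_ge0 _) (normr_ge0 _)).
apply: (ge0_ler_powR (ltW p0)); rewrite ?nnegrE ?addr_ge0 //.
by rewrite (_ : x - z = (x - c) - (z - c)) ?ler_normB // opprB addrA subrK.
Qed.
End truncation.

Section hahn_banach.
Variables (R : realType) (V : normedModType R).

(* Partial functionals are handled through their graphs, so that a chain of
   extensions is joined by a union. *)
Definition dominated_linear_graph (G : set (V * R)) : Prop :=
  [/\ G (0, 0),
      forall x r y s, G (x, r) -> G (y, s) -> G (x + y, r + s),
      forall (a : R) x r, G (x, r) -> G (a *: x, a * r) &
      forall x r, G (x, r) -> r <= `|x| ].

Lemma dominated_graph_functional G x r s : dominated_linear_graph G ->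
  G (x, r) -> G (x, s) -> r = s.
Proof.
case=> _ Gadd Gsc Gdom Gr Gs.
have rs := Gdom _ _ (Gadd _ _ _ _ Gr (Gsc (-1) _ _ Gs)).
have sr := Gdom _ _ (Gadd _ _ _ _ Gs (Gsc (-1) _ _ Gr)).
rewrite scaleN1r subrr normr0 mulN1r subr_le0 in rs.
rewrite scaleN1r subrr normr0 mulN1r subr_le0 in sr.
by apply/eqP; rewrite eq_le rs sr.
Qed.

Lemma dominated_graph_extension_value G x0 : dominated_linear_graph G ->
  exists a, forall s r, G (s, r) -> r - `|s - x0| <= a /\ a <= `|s + x0| - r.
Proof.
case=> G0 Gadd _ Gdom.
pose E := [set u.2 - `|u.1 - x0| | u in G].
have Eub s r : G (s, r) -> ubound E (`|s + x0| - r).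
  move=> Gsr _ [[s' r'] Gsr' <-] /=.
  have := Gdom _ _ (Gadd _ _ _ _ Gsr' Gsr).
  have := ler_normD (s' - x0) (s + x0).
  rewrite addrACA addNr addr0; lra.
have E0 : E !=set0 by exists (0 - `|0 - x0|), (0, 0).
exists (sup E) => s r Gsr; split; last exact: ge_sup E0 (Eub _ _ Gsr).
by apply: sup_upper_bound; [split=> //; exists (`|0 + x0| - 0); exact: Eub|exists (s, r)].
Qed.

Lemma dominated_graph_extend G x0 : dominated_linear_graph G ->
  exists2 G', dominated_linear_graph G' & G `<=` G' /\ exists a, G' (x0, a).
Proof.
move=> dG; have [a ab] := dominated_graph_extension_value x0 dG.
have [G0 Gadd Gsc Gdom] := dG.
pose G' := [set u | exists s r (t : R), G (s, r) /\ u = (s + t *: x0, r + t * a)].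
exists G'; last first.
  split; first by move=> [s r] Gsr; exists s, r, 0; rewrite scale0r mul0r !addr0.
  by exists a, 0, 0, 1; rewrite add0r scale1r mul1r add0r.
split.
- by exists 0, 0, 0; rewrite scale0r mul0r !addr0.
- move=> _ _ _ _ [s1 [r1 [t1 [G1 [-> ->]]]]] [s2 [r2 [t2 [G2 [-> ->]]]]].
  exists (s1 + s2), (r1 + r2), (t1 + t2); split; first exact: Gadd _ _ _ _ G1 G2.
  by rewrite scalerDl mulrDl; congr (_, _); rewrite addrACA.
- move=> c _ _ [s [r [t [Gsr [-> ->]]]]].
  exists (c *: s), (c * r), (c * t); split; first exact: Gsc c _ _ Gsr.
  by rewrite scalerDr scalerA mulrDr mulrA.
- move=> _ _ [s [r [t [Gsr [-> ->]]]]].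
  have [t0|t0|->] := ltgtP t 0; last by rewrite scale0r mul0r !addr0; exact: Gdom.
  + have u0 : 0 < - t by rewrite oppr_gt0.
    have [+ _] := ab _ _ (Gsc (- t)^-1 _ _ Gsr).
    have -> : (- t)^-1 *: s - x0 = (- t)^-1 *: (s + t *: x0).
      by rewrite scalerDr scalerA invrN mulNr mulVf ?ltr0_neq0 // scaleN1r.
    rewrite normrZ gtr0_norm ?invr_gt0 // -mulrBr => /(ler_wpM2l (ltW u0)).
    rewrite mulVKf ?gt_eqF // mulNr; lra.
  + have [_] := ab _ _ (Gsc t^-1 _ _ Gsr).
    have -> : t^-1 *: s + x0 = t^-1 *: (s + t *: x0).
      by rewrite scalerDr scalerA mulVf ?gt_eqF // scale1r.
    rewrite normrZ gtr0_norm ?invr_gt0 // -mulrBr => /(ler_wpM2l (ltW t0)).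
    rewrite mulVKf ?gt_eqF //; lra.
Qed.

Lemma dominated_graph_chain_union G0 (F : set (set (V * R))) :
  dominated_linear_graph G0 ->
  (forall A, F A -> dominated_linear_graph (A `|` G0)) -> total_on F subset ->
  dominated_linear_graph (\bigcup_(A in F) A `|` G0).
Proof.
move=> dG0 dF Ftot; set U := _ `|` G0.
have subU A : F A -> A `|` G0 `<=` U.
  by move=> FA u [Au|G0u]; [left; exists A|right].
have common u w : U u -> U w ->
    exists2 C, dominated_linear_graph C & [/\ C u, C w & C `<=` U].
  case=> [[A FA Au]|G0u] [[B FB Bw]|G0w].
  - have [AB|BA] := Ftot _ _ FA FB.
      by exists (B `|` G0); [exact: dF|split; [left; exact: AB|left|exact: subU]].
    by exists (A `|` G0); [exact: dF|split; [left|left; exact: BA|exact: subU]].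
  - by exists (A `|` G0); [exact: dF|split; [left|right|exact: subU]].
  - by exists (B `|` G0); [exact: dF|split; [right|left|exact: subU]].
  - by exists G0 => //; split=> // v G0v; right.
have [G00 _ _ _] := dG0.
split.
- by right.
- move=> x r y s Ux Uy; have [C [_ Cadd _ _] [Cx Cy CU]] := common _ _ Ux Uy.
  exact/CU/Cadd.
- move=> a x r Ux; have [C [_ _ Csc _] [Cx _ CU]] := common _ _ Ux Ux.
  exact/CU/Csc.
- move=> x r Ux; have [C [_ _ _ Cdom] [Cx _ _]] := common _ _ Ux Ux.
  exact: Cdom.
Qed.

Lemma dominated_graph_total z : exists2 G, dominated_linear_graph G &
  G (z, `|z|) /\ forall x, exists r, G (x, r).
Proof.
pose G0 := [set (t *: z, t * `|z|) | t in [set: R]].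
have dG0 : dominated_linear_graph G0.
  split.
  - by exists 0; rewrite ?scale0r ?mul0r.
  - move=> _ _ _ _ [t1 _ [<- <-]] [t2 _ [<- <-]].
    by exists (t1 + t2); rewrite ?scalerDl ?mulrDl.
  - by move=> a _ _ [t _ [<- <-]]; exists (a * t); rewrite ?scalerA ?mulrA.
  - by move=> _ _ [t _ [<- <-]]; rewrite normrZ ler_wpM2r // ler_norm.
have [A [dA Amax]] : exists A, dominated_linear_graph (A `|` G0) /\
    forall B, A `<` B -> ~ dominated_linear_graph (B `|` G0).
  by apply: Zorn_bigcup => F dF Ftot; exact: dominated_graph_chain_union.
have G0z : G0 (z, `|z|) by exists 1; rewrite ?scale1r ?mul1r.
exists (A `|` G0) => //; split=> [|x0]; first by right.
apply: contrapT => Nx0; have [G' dG' [AG' [a G'x0]]] := dominated_graph_extend x0 dA.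
apply: (Amax G'); last by rewrite (setUidl (subset_trans (@subsetUr _ A G0) AG')).
split; first exact: subset_trans (@subsetUl _ A G0) AG'.
by move=> G'A; apply: Nx0; exists a; left; exact: G'A.
Qed.
End hahn_banach.

Section linear_of.
Variables (R : realType) (V : normedModType R) (f : V -> R).
Hypothesis f_linear : linear_for *:%R (f : V -> R^o).

(* The body mentions [f_linear] so that the constant takes it as an argument
   and can carry the linear instance below. *)
Definition linear_of : V -> R^o := let _ := f_linear in f.
HB.instance Definition _ := GRing.isLinear.Build R V R^o *:%R linear_of f_linear.
End linear_of.

Section norming_functional.
Variables (R : realType) (V : normedModType R).

Lemma norm_dominated_linear_continuous (phi : {linear V -> R^o}) :
  (forall x, `|phi x| <= `|x|) -> continuous phi.
Proof.
move=> phi_le; apply: bounded_linear_continuous; apply/bounded_funP => r.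
by exists r => x xr; exact: le_trans (phi_le x) xr.
Qed.

Lemma norming_functional (z : V) : exists phi : {linear V -> R^o},
  phi z = `|z| /\ forall x, `|phi x| <= `|x|.
Proof.
have [G dG [Gz Gtotal]] := dominated_graph_total z.
pose f x := projT1 (cid (Gtotal x)).
have Gf x : G (x, f x) by rewrite /f; case: cid.
have [_ Gadd Gsc Gdom] := dG.
have f_linear : linear_for *:%R (f : V -> R^o).
  move=> a x y; apply: (dominated_graph_functional dG (Gf _)).
  exact: Gadd (Gsc _ _ _ (Gf x)) (Gf y).
exists (linear_of f_linear); split; first exact: dominated_graph_functional dG (Gf z) Gz.
move=> x; rewrite ler_norml Gdom ?Gf // andbT lerNl.
by have := Gdom _ _ (Gsc (-1) _ _ (Gf x)); rewrite scaleN1r normrN mulN1r.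
Qed.

Lemma norm_le_of_norming_seq (y_ : nat -> V) z b : y_ @ \oo --> z ->
  (forall k, exists phi : {linear V -> R^o}, [/\ phi (y_ k) = `|y_ k|,
     forall x, `|phi x| <= `|x| & phi z <= b]) ->
  `|z| <= b.
Proof.
move=> yz norming; apply/ler_addgt0Pr => e e0.
have [k /= zyk] := filter_ex (cvgr_dist_lt _ _ yz _ (divr_gt0 e0 (ltr0n _ 2))).
have [phi [phiy phi_le phiz]] := norming k.
have : `|y_ k| <= b + `|z - y_ k|.
  rewrite -phiy -[X in phi X](subrK z) linearD addrC lerD // distrC.
  exact: le_trans (ler_norm _) (phi_le _).
have := ler_normD (y_ k) (z - y_ k); rewrite subrKC.
lra.
Qed.
End norming_functional.

Section strong_measurability.
Context d (T : measurableType d) (R : realType).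

Lemma strongly_meas_sub (V : normedModType R) (G H : set (set T)) (f : T -> V) :
  G `<=` H -> strongly_meas G f -> strongly_meas H f.
Proof.
move=> GH [s [sP scvg]]; exists s; split=> // k.
by have [fin levelG] := sP k; split=> // y; exact/GH/levelG.
Qed.

Lemma g_sigma_measurable_funT (G : set (set T)) (h : T -> R) :
  G `<=` measurable ->
  measurable_fun (setT : set (g_sigma_algebraType G)) h -> measurable_fun setT h.
Proof.
move=> GM mh _ Y mY; rewrite setTI.
have := mh measurableT Y mY; rewrite setTI.
exact: smallest_sub (sigma_algebra_measurable T) GM _.
Qed.

Lemma strongly_meas_comp (V : normedModType R) (G : set (set T)) (f : T -> V)
    (g : V -> R) : strongly_meas G f -> continuous g ->
  measurable_fun (setT : set (g_sigma_algebraType G)) (g \o f).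
Proof.
move=> [s [sP scvg]] gc.
apply: (@measurable_fun_cvg _ (g_sigma_algebraType G) R setT (fun k => g \o s k))
  => [k _ Y mY|t _].
  have [fin levelG] := sP k.
  rewrite setTI (_ : _ @^-1` _ =
      \bigcup_(y in range (s k) `&` g @^-1` Y) s k @^-1` [set y]).
    apply: fin_bigcup_measurable; first exact: finite_setIl.
    by move=> y _; apply: sub_gen_smallest; exact: levelG.
  apply/seteqP; split => [t Yt|t [y [_ Yy] /= ->]] //.
  by exists (s k t) => //; split => //; exists t.
exact: cvg_comp (scvg t) (gc (f t)).
Qed.

Lemma strongly_meas_compT (V : normedModType R) (f : T -> V) (g : V -> R) :
  strongly_meas measurable f -> continuous g -> measurable_fun setT (g \o f).
Proof.
move=> sf gc; apply: (@g_sigma_measurable_funT measurable) => //.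
exact: strongly_meas_comp.
Qed.

Lemma integrable_norm_dominated_comp (mu : {measure set T -> \bar R})
    (V : normedModType R) (f : T -> V) (phi : V -> R) (A : set T) :
  measurable A -> strongly_meas measurable f -> continuous phi ->
  (forall x, `|phi x| <= `|x|) ->
  mu.-integrable setT (EFin \o (fun t => `|f t|)) ->
  mu.-integrable A (EFin \o (phi \o f)).
Proof.
move=> mA sf phic phi_le /(integrableS measurableT mA (subsetT A)) intA.
apply: (le_integrable mA _ _ intA) => [|t _]; last by rewrite /= lee_fin normr_id phi_le.
exact/measurable_EFinP/(measurable_funS measurableT)/strongly_meas_compT.
Qed.
End strong_measurability.

Section conditional_sign.
Context d (T : measurableType d) (R : realType).
Variables (mu : {finite_measure set T -> \bar R}) (G : set (set T)).
Hypothesis G_sub : sub_sigma G.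

Lemma ae_le0_of_Rintegral_le0 (h : T -> R) :
  measurable_fun (setT : set (g_sigma_algebraType G)) h ->
  (forall A, G A -> mu.-integrable A (EFin \o h) -> \int[mu]_(t in A) h t <= 0) ->
  {ae mu, forall t, h t <= 0}.
Proof.
move=> mh int_le0; have [sG GM] := G_sub.
pose A (m : nat) := [set t | m.+1%:R^-1 < h t <= m%:R].
have GA m : G (A m).
  rewrite -(measurable_g_measurableTypeE sG).
  have := mh measurableT _ (measurable_itv `](m.+1%:R^-1), m%:R]); rewrite setTI.
  by congr (_ _); apply/seteqP; split => t /=; rewrite in_itv.
have muA0 m : mu (A m) = 0.
  have mA := GM _ (GA m).
  have intA : mu.-integrable (A m) (EFin \o h).
    apply: (le_integrable mA _ _ (finite_measure_integrable_cst mu m%:R mA))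
      => [|t /andP[hm0 hm]].
      exact/measurable_EFinP/(measurable_funS measurableT)/(g_sigma_measurable_funT GM).
    rewrite /= lee_fin normr_nat ger0_norm //.
    by apply: le_trans (ltW hm0); rewrite invr_ge0.
  have : m.+1%:R^-1 * fine (mu (A m)) <= 0.
    apply: le_trans (int_le0 _ (GA m) intA); rewrite -Rintegral_cst //.
    apply: le_Rintegral => //; first exact: finite_measure_integrable_cst.
    by move=> t /andP[/ltW].
  rewrite pmulr_rle0 ?invr_gt0 // => mu_le0.
  rewrite -[mu _]fineK ?fin_num_measure //; congr EFin.
  by apply/eqP; rewrite eq_le mu_le0 fine_ge0 ?measure_ge0.
have null_A : mu.-negligible (\bigcup_m A m).
  by apply: negligible_bigcup => m; exists (A m); split; [exact: GM (GA m)|exact: muA0|].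
apply: negligibleS null_A => t /= /negP; rewrite -ltNge => ht.
have [m [/= hm1 hm2]] := filter_ex
  (filterI (near_infty_natSinv_lt (PosNum ht)) (nbhs_infty_ger (h t))).
by exists m => //; rewrite /A /= hm1.
Qed.
End conditional_sign.

Lemma finite_range_comp2 (T A B C : Type) (f : T -> A) (g : T -> B)
    (op : A -> B -> C) : finite_set (range f) -> finite_set (range g) ->
  finite_set (range (fun t => op (f t) (g t))).
Proof.
move=> fin_f fin_g.
apply: (@sub_finite_set _ _ [set op x.1 x.2 | x in range f `*` range g]).
  by move=> _ [t _ <-]; exists (f t, g t) => //; split; exists t.
by apply: finite_image; exact: finite_setX.
Qed.

Section ae_norm_bound.
Context d (T : measurableType d) (R : realType) (V : normedModType R).
Variable mu : {measure set T -> \bar R}.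

Lemma ae_norm_le_of_functionals (f : T -> V) (b : T -> R) (s : nat -> T -> V) :
  (forall k, finite_set (range (s k))) -> (forall t, s^~ t @ \oo --> f t) ->
  (forall phi : {linear V -> R^o}, (forall x, `|phi x| <= `|x|) ->
     {ae mu, forall t, phi (f t) <= b t}) ->
  {ae mu, forall t, `|f t| <= b t}.
Proof.
move=> fin scvg phi_ae.
have [l lP] := choice (fun k => (finite_seqP _).1 (fin k)).
have [phi phiP] := choice (@norming_functional R V).
have : {ae mu, forall t k j, phi (nth 0 (l k) j) (f t) <= b t}.
  by apply: ae_foralln => k; apply: ae_foralln => j; exact/phi_ae/(phiP _).2.
apply: filterS => t phi_le; apply: norm_le_of_norming_seq (scvg t) _ => k.
have skl : [set` l k] (s k t) by rewrite -lP; exists t.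
have [phi_s phi_dom] := phiP (s k t).
exists (phi (s k t)); split=> //.
by have := phi_le k (index (s k t) (l k)); rewrite (nth_index 0 skl).
Qed.
End ae_norm_bound.

Section cond_exp_functional.
Context d (T : measurableType d) (R : realType) (V : normedModType R).
Variables (P : probability T R) (G : set (set T)) (X Y : T -> V).
Hypotheses (GM : G `<=` measurable) (XY : cond_exp P G X Y).
Variables (phi : {linear V -> R^o}) (phi_le : forall x, `|phi x| <= `|x|).

Let phi_cont : continuous phi := norm_dominated_linear_continuous phi_le.

Lemma cond_exp_integrable_l A : measurable A -> P.-integrable A (EFin \o (phi \o X)).
Proof.
have [sX iX _ _ _] := XY.
by move=> mA; exact: integrable_norm_dominated_comp mA sX phi_cont phi_le iX.
Qed.

Lemma cond_exp_integrable_r A : measurable A -> P.-integrable A (EFin \o (phi \o Y)).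
Proof.
have [_ _ sY iY _] := XY; move=> mA.
exact: integrable_norm_dominated_comp mA (strongly_meas_sub GM sY) phi_cont phi_le iY.
Qed.

Lemma cond_exp_Rintegral A : G A ->
  \int[P]_(t in A) phi (X t) = \int[P]_(t in A) phi (Y t).
Proof. by have [_ _ _ _ eqXY] := XY; move=> GA; rewrite /Rintegral eqXY. Qed.
End cond_exp_functional.

Section truncated_mean.
Context d (T : measurableType d) (R : realType) (B : normedModType R).
Variables (P : probability T R) (G : set (set T)) (p lambda : R) (mu : B).
Variables (X Zh W : T -> B) (Wp : T -> R^o).
Hypotheses (G_sub : sub_sigma G) (p_gt1 : 1 < p) (lambda_gt0 : 0 < lambda).
Hypotheses (X_mean : cond_exp P G X (cst mu))
  (X_moment : cond_exp P G (fun t => (`|X t - mu| `^ p : R^o)) Wp)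
  (Zh_meas : strongly_meas G Zh)
  (W_trunc : cond_exp P G (fun t => Trunc (lambda *: (X t - Zh t)) *: (X t - Zh t)) W).
Variables (phi : {linear B -> R^o}) (phi_le : forall x, `|phi x| <= `|x|).

Let c := Kp p * 2 `^ (p - 1) * lambda `^ (p - 1).
Let GM : G `<=` measurable := G_sub.2.
Let phi_cont : continuous phi := norm_dominated_linear_continuous phi_le.
Let id_le (x : R^o) : `|idfun x| <= `|x| := lexx _.

(* [main] and [proxy] have the same integral over every set of [G], and
   [proxy <= shift] pointwise; [shift] need not be integrable, hence the
   integrability hypothesis in [ae_le0_of_Rintegral_le0]. *)
Let TY t := Trunc (lambda *: (X t - Zh t)) *: (X t - Zh t).
Let q t := `|X t - mu| `^ p.
Let proxy t : R := phi (X t) - phi (TY t) - c * q t.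
Let main t : R := phi mu - phi (W t) - c * Wp t.
Let shift t : R := phi (Zh t) + c * `|Zh t - mu| `^ p.
Let excess t : R := main t - shift t.

Let proxy_le_shift t : proxy t <= shift t.
Proof.
have := norm_sub_Trunc_le_around (X t) (Zh t) mu lambda_gt0 p_gt1.
rewrite -/c -/(TY t).
have := le_trans (ler_norm _) (phi_le ((X t - Zh t) - TY t)).
rewrite !linearB /= /proxy /shift /q; lra.
Qed.

Let excess_measurable : measurable_fun (setT : set (g_sigma_algebraType G)) excess.
Proof.
have norm_cont : continuous (fun x : B => `|x - mu|).
  move=> x; apply: (@continuous_comp _ _ _ (fun y : B => y - mu) Num.norm).
    exact: cvgB cvg_id (cvg_cst _).
  exact: norm_continuous.
have id_cont := @norm_dominated_linear_continuous _ _ idfun id_le.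
have [_ _ Wmeas _ _] := W_trunc; have [_ _ Wpmeas _ _] := X_moment.
apply: measurable_funB; [apply: measurable_funB|apply: measurable_funD].
- exact: measurable_funB (measurable_cst _) (strongly_meas_comp Wmeas phi_cont).
- exact: measurable_funM (measurable_cst _) (strongly_meas_comp Wpmeas id_cont).
- exact: strongly_meas_comp Zh_meas phi_cont.
- apply: measurable_funM (measurable_cst _) _.
  exact: measurableT_comp (measurable_powR p) (strongly_meas_comp Zh_meas norm_cont).
Qed.

Let integrable_main A : measurable A -> P.-integrable A (EFin \o main).
Proof.
move=> mA; have int_mu := finite_measure_integrable_cst P (phi mu) mA.
have int_W := cond_exp_integrable_r GM W_trunc phi_le mA.
have int_Wp : P.-integrable A (EFin \o Wp) := cond_exp_integrable_r GM X_moment id_le mA.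
exact (integrableB mA (integrableB mA int_mu int_W) (integrableZl mA c int_Wp)).
Qed.

Let integrable_proxy A : measurable A -> P.-integrable A (EFin \o proxy).
Proof.
move=> mA; have int_X := cond_exp_integrable_l X_mean phi_le mA.
have int_TY := cond_exp_integrable_l W_trunc phi_le mA.
have int_q : P.-integrable A (EFin \o q) := cond_exp_integrable_l X_moment id_le mA.
exact (integrableB mA (integrableB mA int_X int_TY) (integrableZl mA c int_q)).
Qed.

Let Rintegral_main A : G A -> \int[P]_(t in A) main t = \int[P]_(t in A) proxy t.
Proof.
move=> GA; have mA := GM GA.
have int_mu := finite_measure_integrable_cst P (phi mu) mA.
have int_W := cond_exp_integrable_r GM W_trunc phi_le mA.
have int_Wp : P.-integrable A (EFin \o Wp) := cond_exp_integrable_r GM X_moment id_le mA.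
have int_X := cond_exp_integrable_l X_mean phi_le mA.
have int_TY := cond_exp_integrable_l W_trunc phi_le mA.
have int_q : P.-integrable A (EFin \o q) := cond_exp_integrable_l X_moment id_le mA.
have int_muW : P.-integrable A (EFin \o (fun t => phi mu - phi (W t))) :=
  integrableB mA int_mu int_W.
have int_XTY : P.-integrable A (EFin \o (fun t => phi (X t) - phi (TY t))) :=
  integrableB mA int_X int_TY.
have int_cWp : P.-integrable A (EFin \o (fun t => c * Wp t)) := integrableZl mA c int_Wp.
have int_cq : P.-integrable A (EFin \o (fun t => c * q t)) := integrableZl mA c int_q.
rewrite !RintegralB ?RintegralZl //.
congr (_ - _ - _ * _).
- exact: esym (cond_exp_Rintegral X_mean phi_le GA).
- exact: esym (cond_exp_Rintegral W_trunc phi_le GA).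
- exact: esym (cond_exp_Rintegral X_moment id_le GA).
Qed.

Let Rintegral_excess_le0 A : G A -> P.-integrable A (EFin \o excess) ->
  \int[P]_(t in A) excess t <= 0.
Proof.
move=> GA int_excess; have mA := GM GA.
have int_shift : P.-integrable A (EFin \o shift).
  apply: eq_integrable mA _ _ _ (integrableB mA (integrable_main mA) int_excess) => t _.
  by rewrite /= /excess; congr EFin; ring.
rewrite RintegralB ?integrable_main // Rintegral_main // -RintegralB ?integrable_proxy //.
rewrite -[leRHS](mul0r (fine (P A))) -Rintegral_cst //.
apply: le_Rintegral => //; first exact (integrableB mA (integrable_proxy mA) int_shift).
- exact: finite_measure_integrable_cst.
- by move=> t _; rewrite subr_le0 proxy_le_shift.
Qed.

Lemma functional_residual_le_ae :
  {ae P, forall t, phi (mu - (W t + Zh t)) <= c * (Wp t + `|Zh t - mu| `^ p)}.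
Proof.
have := ae_le0_of_Rintegral_le0 G_sub excess_measurable Rintegral_excess_le0.
apply: filterS => t.
by rewrite /excess /main /shift linearB linearD /=; lra.
Qed.
End truncated_mean.

Theorem lemma3 (d : measure_display) (T : measurableType d) (R : realType)
  (P : probability T R) (B : completeNormedModType R)
  (F : nat -> set (set T))
  (hF : forall k, sub_sigma (F k))
  (hFmono : forall k l, (k <= l)%N -> F k `<=` F l)
  (n : nat) (hn : (1 <= n)%N)
  (p : R) (hp1 : 1 < p) (hp2 : p <= 2)
  (v : R) (hv : 0 < v) (mu : B)
  (X : T -> B)
  (hXmeas : strongly_meas measurable X)
  (hXmean : cond_exp P (F n.-1) X (cst mu))
  (hXvar : exists W : T -> R^o,
      cond_exp P (F n.-1) (fun t => (`|X t - mu| `^ p : R^o)) W /\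
      {ae P, forall t, W t <= v})
  (Zh : T -> B) (hZ : strongly_meas (F n.-1) Zh)
  (lambda : R) (hlambda : 0 < lambda)
  (W : T -> B)
  (hW : cond_exp P (F n.-1)
          (fun t => Trunc (lambda *: (X t - Zh t)) *: (X t - Zh t)) W) :
  {ae P, forall t,
     `|mu - (W t + Zh t)| <=
       Kp p * 2 `^ (p - 1) * lambda `^ (p - 1) * (v + `|Zh t - mu| `^ p)}.
Proof.
(* Only F_(n-1) enters and [hXmeas] is part of [hXmean]. *)
have [Wp [X_moment Wp_le]] := hXvar.
have [_ _ [sW [sWP sWcvg]] _ _] := hW; have [sZ [sZP sZcvg]] := hZ.
apply: (ae_norm_le_of_functionals (s := fun k t => mu - (sW k t + sZ k t))).
- by move=> k; exact: finite_range_comp2 (fun a b => mu - (a + b)) (sWP k).1 (sZP k).1.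
- by move=> t; exact: cvgB (cvg_cst _) (cvgD (sWcvg t) (sZcvg t)).
move=> phi phi_le.
have residual_le :=
  functional_residual_le_ae (hF n.-1) hp1 hlambda hXmean X_moment hZ hW phi_le.
apply: filterS2 residual_le Wp_le => t /le_trans + Wpv; apply.
have p0 : 0 < p := lt_trans ltr01 hp1.
apply: ler_wpM2l; last by rewrite lerD2r.
exact: mulr_ge0 (mulr_ge0 (Kp_ge0 p0) (powR_ge0 _ _)) (powR_ge0 _ _).
Qed.
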